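(* Let $\Gamma$ be a countably infinite group, $n\in\mathbb N$, and $f=M-g\in M_n(\mathbb Z\Gamma)$ with $M=\mathrm{diag}(M_1,\dots,M_n)$ for positive integers $M_k$, $M_k>\sum_{m\in[n]}\|g^{(mk)}\|_1$ for every $k\in[n]$, and suppose there is a subsemigroup $P\subseteq\Gamma\setminus\{e_\Gamma\}$ containing $\mathrm{supp}(g^{(mk)})$ for all $m,k\in[n]$. Let $h\in(\mathbb Z\Gamma)^n\setminus(\mathbb Z\Gamma)^nf$. Then there exist $(s,k)\in\Gamma\times[n]$ and an integer $1\le j\le M_k-1$ such that $(hf^{-1})_{s,k}-j/M_k\in\mathbb Z$.
   Context: $\mathbb Z\Gamma$ is the integral group ring (finitely supported $\mathbb Z$-valued functions on $\Gamma$ with convolution $(fg)_t=\sum_sf_{ts^{-1}}g_s$); $\ell^1_{\mathbb R}(\Gamma)$ likewise. Under the hypotheses $f$ is invertible in $M_n(\ell^1_{\mathbb R}(\Gamma))$. $h\in(\mathbb Z\Gamma)^n$ is a row vector, $(hF)_m=\sum_kh_kF^{(km)}$, and $(hf^{-1})_{s,k}$ denotes the value at $s$ of the $k$-th entry of $hf^{-1}\in(\ell^1_{\mathbb R}(\Gamma))^n$; $(\mathbb Z\Gamma)^nf=\{af: a\in(\mathbb Z\Gamma)^n\}$. *)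

From HB Require Import structures.
From mathcomp Require Import all_boot all_order all_algebra.
From mathcomp Require Import all_classical all_reals.
From mathcomp Require Import esum.
Set Implicit Arguments. Unset Strict Implicit. Unset Printing Implicit Defensive.
Import Order.TTheory GRing.Theory Num.Theory.
Local Open Scope classical_set_scope.
Local Open Scope ring_scope.

Definition zsupp (G : groupType) (a : G -> int) : set G := [set s | a s != 0].

Definition in_ZG (G : groupType) (a : G -> int) : Prop := finite_set (zsupp a).

Definition l1norm_ZG (G : groupType) (a : G -> int) : int :=
  \sum_(s \in [set: G]) `|a s|.

Definition in_l1 (R : realType) (G : groupType) (F : G -> R) : Prop :=
  summable [set: G] (fun s => (F s)%:E).

(* Whenever one factor is in
   Z Gamma and the other in l^1, only finitely many terms are nonzero, so the
   finitely-supported sum \sum_(s \in setT) of fsbigop is the genuine sum. *)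
Definition conv_ZR (R : realType) (G : groupType) (a : G -> int) (F : G -> R)
  : G -> R := fun t => \sum_(s \in [set: G]) (a (monoid.mul t (monoid.inv s)))%:~R * F s.
Definition conv_RZ (R : realType) (G : groupType) (F : G -> R) (a : G -> int)
  : G -> R := fun t => \sum_(s \in [set: G]) F (monoid.mul t (monoid.inv s)) * (a s)%:~R.
Definition conv_ZZ (G : groupType) (a b : G -> int) : G -> int :=
  fun t => \sum_(s \in [set: G]) a (monoid.mul t (monoid.inv s)) * b s.

Definition deltaZ (G : groupType) : G -> int := fun t => (t == monoid.one)%:R.

Definition fmat (G : groupType) (n : nat) (M : 'I_n -> nat)
  (g : 'I_n -> 'I_n -> G -> int) : 'I_n -> 'I_n -> G -> int :=
  fun m k t => ((m == k)%:R * (M k)%:R * deltaZ t) - g m k t.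

Definition matmul_ZR (R : realType) (G : groupType) (n : nat)
  (A : 'I_n -> 'I_n -> G -> int) (F : 'I_n -> 'I_n -> G -> R) :
  'I_n -> 'I_n -> G -> R :=
  fun m k t => \sum_(l < n) conv_ZR (A m l) (F l k) t.
Definition matmul_RZ (R : realType) (G : groupType) (n : nat)
  (F : 'I_n -> 'I_n -> G -> R) (A : 'I_n -> 'I_n -> G -> int) :
  'I_n -> 'I_n -> G -> R :=
  fun m k t => \sum_(l < n) conv_RZ (F m l) (A l k) t.

Definition idmat (R : realType) (G : groupType) (n : nat) :
  'I_n -> 'I_n -> G -> R := fun m k t => ((m == k) && (t == monoid.one))%:R.

Definition rowmul_ZR (R : realType) (G : groupType) (n : nat)
  (h : 'I_n -> G -> int) (F : 'I_n -> 'I_n -> G -> R) : 'I_n -> G -> R :=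
  fun m t => \sum_(k < n) conv_ZR (h k) (F k m) t.
Definition rowmul_ZZ (G : groupType) (n : nat)
  (h : 'I_n -> G -> int) (A : 'I_n -> 'I_n -> G -> int) : 'I_n -> G -> int :=
  fun m t => \sum_(k < n) conv_ZZ (h k) (A k m) t.

From HB Require Import structures.
From mathcomp Require Import all_boot all_order all_algebra.
From mathcomp Require Import all_classical all_reals.
From mathcomp Require Import esum finmap.
From mathcomp Require Import ring lra zify.
Import Order.TTheory GRing.Theory Num.Theory.
Local Open Scope classical_set_scope.
Local Open Scope ring_scope.
Set Implicit Arguments. Unset Strict Implicit. Unset Printing Implicit Defensive.

(* Write x = h f^{-1} and F = f^{-1}.  The proof has three ingredients.
   1. Shape of F.  From F f = I, i.e. M_k F^{(mk)} = delta + sum_l F^{(ml)} g^{(lk)},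
      a maximal-modulus argument (an l^1 function attains its maximal modulus on
      any set where it is somewhere nonzero) shows that F^{(mk)} vanishes outside
      P u {e}; comparing coefficients at e then gives F^{(mk)}(e) = delta_mk / M_k.
   2. Reduction.  The rounding r = floor(x + 1/2) is finitely supported because x
      is small off a finite set; h' = h - r f is then a nonzero element of
      (Z Gamma)^n (as h is not in (Z Gamma)^n f), and h' F = x - r by f F = I.
   3. Evaluation.  At a point u of the support of h' that is minimal for the
      strict order "w^{-1} u in P", step 1 gives (h' F)_m(u) = h'_m(u) / M_m;
      since |x - r| <= 1/2 this forces 0 < |h'_m(u)| < M_m, so that x_m(u) has
      fractional part j / M_m with 1 <= j <= M_m - 1.
   Finitely supported functions are handled through an explicit finite list
   containing their support, which turns all convolutions into finite sums;
   the file develops these finite-support facts, the convolution algebra, the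
   l^1 facts, the consequences of F f = I, and finally the three steps above. *)

Definition supported_in (T : eqType) (V : nmodType) (a : T -> V) (A : seq T) :
  Prop := forall u, u \notin A -> a u = 0.

Lemma fsbigT_seq (T : choiceType) (V : nmodType) (a : T -> V) (A : seq T) :
  supported_in a A -> \sum_(s \in [set: T]) a s = \sum_(s <- undup A) a s.
Proof.
move=> aA; rewrite (fsbig_seq _ _ (undup_uniq A)).
apply/esym/fsbig_widen => // s [_ /=]; rewrite mem_undup => /negP sA.
by rewrite /preimage /= aA.
Qed.

Lemma big_undup_single (T : choiceType) (V : nmodType) (a : T -> V) (A : seq T) u :
  (forall s, s != u -> a s = 0) -> (u \notin A -> a u = 0) ->
  \sum_(s <- undup A) a s = a u.
Proof.
move=> a_u uA; rewrite -fsbigT_seq; last first.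
  by move=> s sA; case: (eqVneq s u) sA => [-> /uA|/a_u].
rewrite (@fsbigT_seq _ _ _ [:: u]); first by rewrite /= big_seq1.
by move=> s; rewrite inE => /a_u.
Qed.

Lemma in_ZG_supported (G : groupType) (a : G -> int) :
  in_ZG a -> exists A : seq G, supported_in a A.
Proof.
move=> fin; exists (enum_fset (fset_set (zsupp a))) => u.
rewrite in_fset_set // notin_setE /zsupp /= => /negP.
by rewrite negbK => /eqP.
Qed.

Lemma supported_in_ZG (G : groupType) (a : G -> int) (A : seq G) :
  supported_in a A -> in_ZG a.
Proof.
move=> aA; apply: (sub_finite_set _ (finite_seq A)) => u /=.
by rewrite /zsupp /=; apply: contra_neqT => /aA ->.
Qed.

Lemma supported_family (I : finType) (T : eqType) (V : nmodType) (a : I -> T -> V) :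
  (forall i, exists A : seq T, supported_in (a i) A) ->
  exists A : seq T, forall i, supported_in (a i) A.
Proof.
move=> H; have [f Hf] := boolp.choice H.
exists (flatten [seq f i | i <- enum I]) => i u uA; apply: Hf.
apply: contra uA => uf; apply/flattenP; exists (f i) => //.
by apply/mapP; exists i; rewrite ?mem_enum.
Qed.

Lemma supported_inB (T : eqType) (V : zmodType) (a b : T -> V) (A B : seq T) :
  supported_in a A -> supported_in b B ->
  supported_in (fun u => a u - b u) (A ++ B).
Proof.
by move=> aA bB u; rewrite mem_cat negb_or => /andP[/aA -> /bB ->]; rewrite subr0.
Qed.

Lemma fsbigT_conv (G : groupType) (V : nmodType) (phi : G -> G -> V) (t : G) :
  \sum_(s \in [set: G]) phi (t * s^-1)%g s = \sum_(u \in [set: G]) phi u (u^-1 * t)%g.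
Proof.
rewrite (reindex_fsbigT (fun u : G => (u^-1 * t)%g)).
  by apply: eq_fsbigr => u _; rewrite invgM invgK mulgA mulgV mul1g.
exists (fun s : G => (t * s^-1)%g) => u /=.
  by rewrite invgM invgK mulgA mulgV mul1g.
by rewrite invgM invgK -mulgA mulVg mulg1.
Qed.

Lemma conv_ZR_seq (R : realType) (G : groupType) (a : G -> int) (F : G -> R) t A :
  supported_in a A -> conv_ZR a F t = \sum_(u <- undup A) (a u)%:~R * F (u^-1 * t)%g.
Proof.
move=> aA; rewrite /conv_ZR (fsbigT_conv (fun x s => (a x)%:~R * F s)).
by rewrite (fsbigT_seq (A := A)) // => u /aA ->; rewrite mul0r.
Qed.

Lemma conv_ZZ_seq (G : groupType) (a b : G -> int) t A :
  supported_in a A -> conv_ZZ a b t = \sum_(u <- undup A) a u * b (u^-1 * t)%g.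
Proof.
move=> aA; rewrite /conv_ZZ (fsbigT_conv (fun x s => a x * b s)).
by rewrite (fsbigT_seq (A := A)) // => u /aA ->; rewrite mul0r.
Qed.

Lemma conv_RZ_seq (R : realType) (G : groupType) (F : G -> R) (a : G -> int) t A :
  supported_in a A -> conv_RZ F a t = \sum_(s <- undup A) F (t * s^-1)%g * (a s)%:~R.
Proof.
by move=> aA; rewrite /conv_RZ (fsbigT_seq (A := A)) // => s /aA ->; rewrite mulr0.
Qed.

Lemma l1norm_seq (G : groupType) (a : G -> int) A :
  supported_in a A -> l1norm_ZG a = \sum_(s <- undup A) `|a s|.
Proof. by move=> aA; rewrite /l1norm_ZG (fsbigT_seq (A := A)) // => s /aA ->. Qed.


Section Convolution.
Variables (R : realType) (G : groupType).

Lemma conv_ZR_subl (a b : G -> int) (F : G -> R) t A B :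
  supported_in a A -> supported_in b B ->
  conv_ZR (fun s => a s - b s) F t = conv_ZR a F t - conv_ZR b F t.
Proof.
move=> aA bB; have aAB : supported_in a (A ++ B).
  by move=> u; rewrite mem_cat negb_or => /andP[/aA].
have bAB : supported_in b (A ++ B).
  by move=> u; rewrite mem_cat negb_or => /andP[_ /bB].
rewrite !(conv_ZR_seq _ _ (supported_inB aA bB)) (conv_ZR_seq _ _ aAB).
rewrite (conv_ZR_seq _ _ bAB) -sumrB.
by apply: eq_bigr => s _; rewrite rmorphB mulrBl.
Qed.

Lemma conv_ZR_suml (I : finType) (a : I -> G -> int) (F : G -> R) t A :
  (forall i, supported_in (a i) A) ->
  conv_ZR (fun s => \sum_i a i s) F t = \sum_i conv_ZR (a i) F t.
Proof.
move=> aA; have sA : supported_in (fun s => \sum_i a i s) A.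
  by move=> u uA; rewrite big1 // => i _; apply: aA.
rewrite (conv_ZR_seq _ _ sA); under [RHS]eq_bigr do rewrite (conv_ZR_seq _ _ (aA _)).
rewrite exchange_big; apply: eq_bigr => u _.
by rewrite rmorph_sum mulr_suml.
Qed.

Lemma conv_ZR_sumr (I : finType) (a : G -> int) (F : I -> G -> R) t A :
  supported_in a A ->
  conv_ZR a (fun s => \sum_i F i s) t = \sum_i conv_ZR a (F i) t.
Proof.
move=> aA; rewrite (conv_ZR_seq _ _ aA).
under [RHS]eq_bigr do rewrite (conv_ZR_seq _ _ aA).
by rewrite exchange_big; apply: eq_bigr => u _; rewrite mulr_sumr.
Qed.

Lemma conv_ZR_delta (a : G -> int) (b : bool) t :
  conv_ZR a (fun s => (b && (s == 1%g))%:R) t = b%:R * (a t)%:~R :> R.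
Proof.
rewrite /conv_ZR (fsbigT_seq (A := [:: 1%g])); last first.
  by move=> s; rewrite inE => /negbTE ->; rewrite andbF mulr0.
by rewrite /= big_seq1 eqxx andbT invg1 mulg1 mulrC.
Qed.

Lemma translate_supported (b : G -> int) A B v :
  supported_in b B -> v \in A ->
  supported_in (fun w => b (v^-1 * w)%g) [seq (x * u)%g | x <- A, u <- B].
Proof.
move=> bB vA w; apply: contraNeq => bv; apply/allpairsP; exists (v, (v^-1 * w)%g) => /=.
by rewrite mulVKg; split => //; apply: contraR bv => /bB ->.
Qed.

Lemma conv_ZZ_supported (a b : G -> int) A B :
  supported_in a A -> supported_in b B ->
  supported_in (conv_ZZ a b) [seq (v * u)%g | v <- A, u <- B].
Proof.
move=> aA bB t tAB; rewrite (conv_ZZ_seq _ _ aA) big1_seq // => v /andP[_].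
by rewrite mem_undup => vA; rewrite (translate_supported bB vA) ?mulr0.
Qed.

Lemma conv_ZR_translate (b : G -> int) (F : G -> R) v t :
  conv_ZR b F (v^-1 * t)%g =
  \sum_(w \in [set: G]) (b (v^-1 * w)%g)%:~R * F (w^-1 * t)%g.
Proof.
rewrite /conv_ZR (fsbigT_conv (fun x s => (b x)%:~R * F s)).
rewrite (reindex_fsbigT (fun w : G => (v^-1 * w)%g)); last first.
  by exists (fun u => (v * u)%g) => u; rewrite ?mulKg ?mulVKg.
by apply: eq_fsbigr => w _; rewrite invgM invgK -mulgA mulVKg.
Qed.

Lemma conv_ZR_assoc (a b : G -> int) (F : G -> R) t A B :
  supported_in a A -> supported_in b B ->
  conv_ZR (conv_ZZ a b) F t = conv_ZR a (conv_ZR b F) t.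
Proof.
move=> aA bB; rewrite (conv_ZR_seq _ _ (conv_ZZ_supported aA bB)) (conv_ZR_seq _ _ aA).
under eq_bigr => w _ do rewrite (conv_ZZ_seq _ _ aA) rmorph_sum mulr_suml.
rewrite exchange_big big_seq [RHS]big_seq; apply: eq_bigr => v; rewrite mem_undup => vA.
rewrite conv_ZR_translate (fsbigT_seq (A := [seq (x * u)%g | x <- A, u <- B])).
  by rewrite mulr_sumr; apply: eq_bigr => w _; rewrite rmorphM mulrA.
by move=> w /(translate_supported bB vA) ->; rewrite mul0r.
Qed.

Lemma rowmul_ZR_subl (n : nat) (a b : 'I_n -> G -> int) (F : 'I_n -> 'I_n -> G -> R)
    A B m t :
  (forall k, supported_in (a k) A) -> (forall k, supported_in (b k) B) ->
  rowmul_ZR (fun k s => a k s - b k s) F m t = rowmul_ZR a F m t - rowmul_ZR b F m t.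
Proof.
move=> aA bB; rewrite /rowmul_ZR -sumrB; apply: eq_bigr => k _.
exact: conv_ZR_subl (aA k) (bB k).
Qed.

Lemma rowmul_ZZ_supported (n : nat) (r : 'I_n -> G -> int)
    (a : 'I_n -> 'I_n -> G -> int) V S :
  (forall l, supported_in (r l) V) -> (forall l k, supported_in (a l k) S) ->
  forall k, supported_in (rowmul_ZZ r a k) [seq (v * u)%g | v <- V, u <- S].
Proof.
move=> rV aS k t tVS; rewrite /rowmul_ZZ big1 // => l _.
exact: (conv_ZZ_supported (rV l) (aS l k)).
Qed.

Lemma rowmul_assoc (n : nat) (r : 'I_n -> G -> int) (a : 'I_n -> 'I_n -> G -> int)
    (F : 'I_n -> 'I_n -> G -> R) V S :
  (forall l, supported_in (r l) V) -> (forall l k, supported_in (a l k) S) ->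
  matmul_ZR a F = @idmat R G n ->
  forall m t, rowmul_ZR (rowmul_ZZ r a) F m t = (r m t)%:~R.
Proof.
move=> rV aS E m t; rewrite /rowmul_ZR /rowmul_ZZ.
under eq_bigr => k _.
  rewrite (conv_ZR_suml _ _ (fun l => conv_ZZ_supported (rV l) (aS l k))).
  under eq_bigr => l _ do rewrite (conv_ZR_assoc _ _ (rV l) (aS l k)).
  over.
rewrite exchange_big /=.
under eq_bigr => l _.
  rewrite -(conv_ZR_sumr _ _ (rV l)).
  have -> : (fun s => \sum_k conv_ZR (a l k) (F k m) s) = @idmat R G n l m.
    exact: (congr1 (fun X => X l m) E).
  rewrite conv_ZR_delta.
  over.
rewrite (bigD1 m) //= eqxx mul1r big1 ?addr0 // => l /negbTE ->.
by rewrite mul0r.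
Qed.
End Convolution.

Lemma l1_level_finite (R : realType) (G : groupType) (F : G -> R) (c : R) :
  in_l1 F -> 0 < c -> finite_set [set s | c <= `|F s|].
Proof.
move=> Fl c0; apply: contrapT => inf.
have Es : (esum [set: G] (fun s => `|(F s)%:E|) < +oo)%E := Fl.
set e := esum _ _ in Es.
have e0 : (0 <= e)%E by apply: esum_ge0 => s _; exact: abse_ge0.
have ef : e \is a fin_num by rewrite fin_numElt Es andbT (lt_le_trans (ltNyr 0)).
set N := Num.truncn (fine e / c).
have [B BA szB] := infinite_set_fset N.+1 inf.
have : (((N.+1)%:R * c)%:E <= e)%E.
  apply: esum_ge; exists [set` B]; first by split => //; exact: finite_fset.
  rewrite -(@fsbig_seq _ _ _ _ (enum_fset B)) //.
  under eq_bigr do rewrite abse_EFin.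
  rewrite sumEFin lee_fin.
  apply: (@le_trans _ _ (\sum_(i <- enum_fset B) c)).
    rewrite big_const_seq count_predT iter_addr_0 -[c *+ _]mulr_natr [c * _]mulrC.
    by rewrite ler_pM2r // ler_nat; exact: szB.
  rewrite big_seq [X in _ <= X]big_seq; apply: ler_sum => i iB.
  by have := BA i iB.
rewrite -(fineK ef) lee_fin => H.
have := truncnS_gt (fine e / c); rewrite -/N ltr_pdivrMr // => H2.
by have := lt_le_trans H2 H; rewrite ltxx.
Qed.

Lemma seq_argmax (R : realType) (T : eqType) (phi : T -> R) (L : seq T) x0 :
  x0 \in L -> exists2 x, x \in L & forall y, y \in L -> phi y <= phi x.
Proof.
elim: L x0 => [//|a [|b L] IH] x0 _.
  by exists a; rewrite ?inE // => y; rewrite inE => /eqP->.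
have [x xL Hx] := IH b (mem_head _ _).
have [ha|ha] := lerP (phi a) (phi x).
  by exists x; [rewrite inE xL orbT | move=> y; rewrite inE => /orP[/eqP->|/Hx]].
exists a; first exact: mem_head.
by move=> y; rewrite inE => /orP[/eqP->//|/Hx/le_trans]; apply; apply: ltW.
Qed.

Lemma l1_family_attains_max (R : realType) (G : groupType) (I : finType)
    (H : I -> G -> R) (D : set G) :
  (forall i, in_l1 (H i)) -> forall i0 t0, D t0 -> H i0 t0 != 0 ->
  exists i t, [/\ D t, H i t != 0 & forall j s, D s -> `|H j s| <= `|H i t|].
Proof.
move=> Hl i0 t0 Dt0 H0; set c := `|H i0 t0|.
have c0 : 0 < c by rewrite normr_gt0.
pose S i := enum_fset (fset_set [set s | c <= `|H i s|]).
have memS i s : (s \in S i) = (c <= `|H i s|).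
  rewrite /S in_fset_set; last exact: l1_level_finite.
  by apply/idP/idP => [/set_mem //|?]; apply: mem_set.
pose L := [seq (i, s) | i <- enum I, s <- S i].
have memL i s : c <= `|H i s| -> (i, s) \in L.
  by move=> hc; apply/allpairsPdep; exists i, s; rewrite mem_enum memS.
pose phi (p : I * G) := if `[< D p.2 >] then `|H p.1 p.2| else 0.
have [[i t] _ Hmax] := seq_argmax phi (memL i0 t0 (lexx _)).
have phic : c <= phi (i, t).
  by have := Hmax (i0, t0) (memL i0 t0 (lexx _)); rewrite /phi /= asboolT.
have Dt : D t.
  by apply: contrapT => nD; move: phic; rewrite /phi /= asboolF // leNgt c0.
move: phic; rewrite /phi /= asboolT // => phic.
exists i, t; split => //; first by rewrite -normr_gt0 (lt_le_trans c0 phic).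
move=> j s Ds; have [hc|hc] := lerP c `|H j s|.
  by have := Hmax (j, s) (memL j s hc); rewrite /phi /= !asboolT.
exact: le_trans (ltW hc) phic.
Qed.

Lemma rowmul_ZR_small (R : realType) (G : groupType) (n : nat) (h : 'I_n -> G -> int)
    (F : 'I_n -> 'I_n -> G -> R) S m (e : R) :
  (forall k, supported_in (h k) S) -> (forall l k, in_l1 (F l k)) -> 0 < e ->
  exists V : seq G, forall t, t \notin V -> `|rowmul_ZR h F m t| < e.
Proof.
move=> hS Fl e0; set H := \sum_(k < n) \sum_(w <- undup S) `|(h k w)%:~R : R|.
have H0 : 0 <= H by apply: sumr_ge0 => k _; apply: sumr_ge0.
set e' := e / (H + 1); have e'0 : 0 < e' by rewrite divr_gt0 // ltr_wpDl.
pose T k := enum_fset (fset_set [set s | e' <= `|F k m s|]).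
have memT k s : (s \in T k) = (e' <= `|F k m s|).
  rewrite /T in_fset_set; last exact: l1_level_finite.
  by apply/idP/idP => [/set_mem //|?]; apply: mem_set.
exists (flatten [seq [seq (w * s)%g | w <- S, s <- T k] | k <- enum 'I_n]) => t tV.
have small k w : w \in S -> `|F k m (w^-1 * t)%g| < e'.
  move=> wS; rewrite ltNge -memT; apply: contra tV => wtT.
  apply/flattenP; exists [seq (w * s)%g | w <- S, s <- T k].
    by apply/mapP; exists k; rewrite ?mem_enum.
  by apply/allpairsP; exists (w, (w^-1 * t)%g); rewrite /= mulVKg.
apply: (@le_lt_trans _ _ (H * e')).
  rewrite /rowmul_ZR mulr_suml; apply: (le_trans (ler_norm_sum _ _ _)).
  apply: ler_sum => k _; rewrite (conv_ZR_seq _ _ (hS k)) mulr_suml.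
  apply: (le_trans (ler_norm_sum _ _ _)); rewrite !big_seq; apply: ler_sum => w.
  by rewrite mem_undup normrM => wS; rewrite ler_wpM2l // ltW ?small.
rewrite /e' mulrCA -[X in _ < X]mulr1 ltr_pM2l //.
by rewrite ltr_pdivrMr ?ltr_wpDl // mul1r ltrDl.
Qed.

Lemma fmat_supported (G : groupType) (n : nat) (M : 'I_n -> nat)
    (g : 'I_n -> 'I_n -> G -> int) l k A :
  supported_in (g l k) A -> supported_in (fmat M g l k) (1%g :: A).
Proof.
move=> gA u; rewrite inE negb_or => /andP[u1 uA].
by rewrite /fmat /deltaZ (negbTE u1) mulr0 gA // subr0.
Qed.

Lemma conv_RZ_fmat (R : realType) (G : groupType) (n : nat) (M : 'I_n -> nat)
    (g : 'I_n -> 'I_n -> G -> int) (F : G -> R) l k t :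
  in_ZG (g l k) ->
  conv_RZ F (fmat M g l k) t = (l == k)%:R * (M k)%:R * F t - conv_RZ F (g l k) t.
Proof.
move=> /in_ZG_supported[A gA].
have g1A : supported_in (g l k) (1%g :: A).
  by move=> u; rewrite inE negb_or => /andP[_ /gA].
rewrite (conv_RZ_seq _ _ (fmat_supported M gA)) (conv_RZ_seq _ _ g1A).
under eq_bigr do rewrite /fmat rmorphB mulrBr.
rewrite sumrB (big_undup_single (u := 1%g)); first last.
- by rewrite mem_head.
- by move=> s s1; rewrite /deltaZ (negbTE s1) !mulr0.
by rewrite /deltaZ eqxx invg1 mulg1 mulr1 rmorphM /= !mulrz_nat mulrC.
Qed.

Section LeftInverse.
Variables (R : realType) (G : groupType) (n : nat) (M : 'I_n -> nat).
Variables (g : 'I_n -> 'I_n -> G -> int) (P : set G) (F : 'I_n -> 'I_n -> G -> R).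
Hypothesis gZ : forall m k, in_ZG (g m k).
Hypothesis Mpos : forall k, (0 < M k)%N.
Hypothesis Mbig : forall k, \sum_(m < n) l1norm_ZG (g m k) < (M k)%:Z.
Hypothesis Psg : forall x y, P x -> P y -> P (monoid.mul x y).
Hypothesis P1 : ~ P monoid.one.
Hypothesis gP : forall m k, zsupp (g m k) `<=` P.
Hypothesis Fl : forall m k, in_l1 (F m k).
Hypothesis Finv_left : matmul_RZ F (fmat M g) = @idmat R G n.

Lemma left_inverse_eqn m k t :
  F m k t * (M k)%:R - \sum_(l < n) conv_RZ (F m l) (g l k) t
  = ((m == k) && (t == 1%g))%:R.
Proof.
have := congr1 (fun X => X m k t) Finv_left; rewrite /matmul_RZ /idmat /= => <-.
under [RHS]eq_bigr => l _ do rewrite conv_RZ_fmat //.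
rewrite sumrB; congr (_ - _).
rewrite (bigD1 k) //= eqxx mul1r big1 ?addr0 1?mulrC // => l /negbTE ->.
by rewrite !mul0r.
Qed.

(* F vanishes outside P u {e}: at a point of maximal modulus the equation
   above would give d M_k <= d sum_l |g^{(lk)}|_1 < d M_k. *)
Lemma inverse_vanishes_off m k t : t != 1%g -> ~ P t -> F m k t = 0.
Proof.
move=> t1 Pt; apply/eqP; apply: contraT => F0.
have [l [u [[u1 Pu] Fu Fmax]]] := l1_family_attains_max
  (D := [set t : G | t != 1%g /\ ~ P t]) (Fl m) (conj t1 Pt) F0.
set d := `|F m l u|; have d0 : 0 < d by rewrite normr_gt0.
have := left_inverse_eqn m l u; rewrite (negbTE u1) andbF => /eqP.
rewrite subr_eq0 => /eqP Eu.
have : d * (M l)%:R <= d * (\sum_(j < n) l1norm_ZG (g j l))%:~R.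
  rewrite -[(M l)%:R]normr_nat -normrM Eu rmorph_sum /= mulr_sumr.
  apply: (le_trans (ler_norm_sum _ _ _)); apply: ler_sum => j _.
  have [A gA] := in_ZG_supported (gZ j l).
  rewrite (conv_RZ_seq _ _ gA) (l1norm_seq gA) rmorph_sum /= mulr_sumr.
  apply: (le_trans (ler_norm_sum _ _ _)); apply: ler_sum => s _.
  have [->|gs] := eqVneq (g j l s) 0; first by rewrite !mulr0 normr0.
  rewrite normrM intr_norm ler_wpM2r //; apply: Fmax.
  have Ps : P s := gP gs.
  split; first by apply/eqP => us1; apply: Pu; rewrite -(mulgVK s u) us1 mul1g.
  by move=> Pus; apply: Pu; rewrite -(mulgVK s u); apply: Psg.
by rewrite ler_pM2l // leNgt; have := Mbig l; rewrite -(ltr_int R) => ->.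
Qed.

Lemma inverse_at_one m k : F m k 1%g = (m == k)%:R / (M k)%:R.
Proof.
have := left_inverse_eqn m k 1%g; rewrite eqxx andbT big1 ?subr0 => [E|l _].
  by rewrite -E mulfK // pnatr_eq0 -lt0n.
have [A gA] := in_ZG_supported (gZ l k).
rewrite (conv_RZ_seq _ _ gA) big1 // => s _.
have [->|gs] := eqVneq (g l k s) 0; first by rewrite mulr0.
have Ps : P s := gP gs.
rewrite mul1g inverse_vanishes_off ?mul0r //.
  by apply/eqP => s1; apply: P1; move: Ps; rewrite -(invgK s) s1 invg1.
by move=> Ps'; apply: P1; rewrite -(mulgV s); apply: Psg.
Qed.

Lemma value_at_minimal (h : 'I_n -> G -> int) S u :
  (forall k, supported_in (h k) S) ->
  (forall k w, h k w != 0 -> ~ P (w^-1 * u)%g) ->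
  forall m, rowmul_ZR h F m u = (h m u)%:~R / (M m)%:R.
Proof.
move=> hS umin m.
have conv_at_u k : conv_ZR (h k) (F k m) u = (h k u)%:~R * F k m 1%g.
  rewrite (conv_ZR_seq _ _ (hS k)) (big_undup_single (u := u)); first by rewrite mulVg.
    move=> w wu; have [->|hw] := eqVneq (h k w) 0; first by rewrite mul0r.
    rewrite inverse_vanishes_off ?mulr0 //; last exact: umin hw.
    by apply/eqP => wu1; move/eqP: wu; apply; rewrite -(mulVKg w u) wu1 mulg1.
  by move=> /hS ->; rewrite mul0r.
rewrite /rowmul_ZR; under eq_bigr do rewrite conv_at_u inverse_at_one.
rewrite (bigD1 m) //= eqxx big1 ?addr0 ?mulrA ?mulr1 // => k /negbTE ->.
by rewrite mul0r mulr0.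
Qed.
End LeftInverse.

Lemma floor_half_eq0 (R : realType) (x : R) : `|x| < 2^-1 -> Num.floor (x + 2^-1) = 0.
Proof.
by rewrite ltr_norml => /andP[? ?]; apply/eqP; rewrite floor_eq add0r /=; apply/andP; split; lra.
Qed.

Lemma rounding_supported (R : realType) (G : groupType) (n : nat) (h : 'I_n -> G -> int)
    (F : 'I_n -> 'I_n -> G -> R) S :
  (forall k, supported_in (h k) S) -> (forall l k, in_l1 (F l k)) ->
  exists V : seq G, forall m,
    supported_in (fun t => Num.floor (rowmul_ZR h F m t + 2^-1)) V.
Proof.
move=> hS Fl; apply: supported_family => m.
have half0 : 0 < 2^-1 :> R by rewrite invr_gt0.
have [V small] := rowmul_ZR_small m hS Fl half0.
by exists V => t /small /floor_half_eq0.
Qed.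

Lemma count_lt (T : eqType) (a b : pred T) (s : seq T) x :
  subpred a b -> x \in s -> b x -> ~~ a x -> (count a s < count b s)%N.
Proof.
move=> ab; elim: s => // y s IH; rewrite inE => /orP[/eqP <-|xs] bx nax /=.
  by rewrite (negbTE nax) bx add0n add1n ltnS sub_count.
rewrite -addnS leq_add //; last exact: IH.
by case: (boolP (a y)) => // /ab ->.
Qed.

(* Since w < u :<-> w^{-1} u \in P is a strict order, every nonempty list has
   a minimal element. *)
Lemma exists_P_minimal (G : groupType) (P : set G) (L : seq G) u0 :
  (forall x y, P x -> P y -> P (x * y)%g) -> ~ P 1%g -> u0 \in L ->
  exists2 u, u \in L & forall w, w \in L -> ~ P (w^-1 * u)%g.
Proof.
move=> Psg P1; pose N u := count (fun w => `[< P (w^-1 * u)%g >]) L.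
elim: {u0}(N u0).+1 {-2}u0 (ltnSn (N u0)) => // k IH u Nu uL.
have [[w wL Pw]|none] := pselect (exists2 w, w \in L & P (w^-1 * u)%g); last first.
  by exists u => // w wL Pw; apply: none; exists w.
apply: (IH w) => //; rewrite ltnS in Nu; apply: (leq_trans _ Nu); apply: (count_lt (x := w)) => //.
- move=> v /asboolP Pv; apply/asboolP.
  by have := Psg _ _ Pv Pw; rewrite -mulgA mulVKg.
- exact/asboolP.
- by apply/asboolP; rewrite mulVg.
Qed.

Lemma minimal_support_point (G : groupType) (I : finType) (P : set G)
    (h : I -> G -> int) S i0 u0 :
  (forall x y, P x -> P y -> P (x * y)%g) -> ~ P 1%g ->
  (forall i, supported_in (h i) S) -> h i0 u0 != 0 ->
  exists i u, h i u != 0 /\ forall j w, h j w != 0 -> ~ P (w^-1 * u)%g.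
Proof.
move=> Psg P1 hS hu0.
have inL i w : h i w != 0 -> w \in [seq v <- S | [exists j, h j v != 0]].
  move=> hw; rewrite mem_filter; apply/andP; split; first by apply/existsP; exists i.
  by apply: contraNT hw => /hS ->.
have [u] := exists_P_minimal Psg P1 (inL _ _ hu0).
rewrite mem_filter => /andP[/existsP[i hiu] _] umin.
by exists i, u; split => // j w /inL /umin.
Qed.

Lemma fractional_witness (R : realType) (x : R) (N : nat) (q : int) :
  (0 < N)%N -> q != 0 -> x - (Num.floor (x + 2^-1))%:~R = q%:~R / N%:R ->
  exists j : nat,
    [/\ (1 <= j)%N, (j <= N.-1)%N & exists z : int, x - j%:R / N%:R = z%:~R].
Proof.
move=> N0 q0 xq; set r := Num.floor (x + 2^-1) in xq.
have NR : 0 < N%:R :> R by rewrite ltr0n.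
have qN : - N%:Z < q < N%:Z.
  have := floor_itv (x + 2^-1); rewrite -/r rmorphD /= => /andP[r1 r2].
  have qE : q%:~R = (x - r%:~R) * N%:R :> R by rewrite xq mulfVK // gt_eqF.
  by rewrite -!(ltr_int R) rmorphN /= qE; apply/andP; split; nra.
have N0' : N%:Z != 0 by rewrite eqz_nat -lt0n.
set j := (q %% N%:Z)%Z; set d := (q %/ N%:Z)%Z.
have qE : q = d * N%:Z + j := divz_eq q N%:Z.
have j0 : 0 <= j := modz_ge0 q N0'.
have jN : j < N%:Z by rewrite ltz_pmod // ltz_nat.
have j_neq0 : j != 0.
  apply: contra_neq q0 => j0'; move: qN; rewrite qE j0' addr0 => /andP[dNl dNr].
  have Npos : 0 < N%:Z by rewrite ltz_nat.
  have dlt : d < 1 by rewrite -(ltr_pM2r Npos) mul1r.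
  have dgt : -1 < d by rewrite -(ltr_pM2r Npos) mulN1r.
  by have -> : d = 0 by lia.
exists `|j|%N; split.
- by rewrite absz_gt0.
- by rewrite -ltnS prednK // -ltz_nat abszE ger0_norm.
- exists (r + d); rewrite natr_absz ger0_norm //.
  have -> : x = r%:~R + q%:~R / N%:R by rewrite -xq addrC subrK.
  by rewrite qE rmorphD rmorphM /= !rmorphD /=; field; rewrite pnatr_eq0 -lt0n.
Qed.

Unset Implicit Arguments.

Theorem lemma5p3 (R : realType) (G : groupType)
  (Gcount : countable [set: G]) (Ginf : infinite_set [set: G])
  (n : nat) (M : 'I_n -> nat) (g : 'I_n -> 'I_n -> G -> int)
  (P : set G) (h : 'I_n -> G -> int) (Finv : 'I_n -> 'I_n -> G -> R) :
  (forall m k, in_ZG (g m k)) ->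
  (forall k, (0 < M k)%N) ->
  (forall k, (\sum_(m < n) l1norm_ZG (g m k) < (M k)%:Z)) ->
  (forall x y, P x -> P y -> P (monoid.mul x y)) ->
  ~ P monoid.one ->
  (forall m k, zsupp (g m k) `<=` P) ->
  (forall k, in_ZG (h k)) ->
  ~ (exists a : 'I_n -> G -> int, (forall k, in_ZG (a k)) /\
       h = rowmul_ZZ a (fmat M g)) ->
  (* Finv is the inverse f^{-1} of f in M_n(l^1_R(Gamma)) *)
  (forall m k, in_l1 (Finv m k)) ->
  matmul_ZR (fmat M g) Finv = @idmat R G n ->
  matmul_RZ Finv (fmat M g) = @idmat R G n ->
  exists (s : G) (k : 'I_n) (j : nat),
    [/\ (1 <= j)%N, (j <= (M k).-1)%N &
        exists z : int,
          rowmul_ZR h Finv k s - j%:R / (M k)%:R = z%:~R].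
Proof.
move=> gZ Mpos Mbig Psg P1 gP hZ h_notin Fl Finv_right Finv_left.
have [Sh hS] := supported_family (fun k => in_ZG_supported (hZ k)).
have [Sg gS] := supported_family (fun p : 'I_n * 'I_n => in_ZG_supported (gZ p.1 p.2)).
have fS l k : supported_in (fmat M g l k) (1%g :: Sg) := fmat_supported M (gS (l, k)).
pose r m t := Num.floor (rowmul_ZR h Finv m t + 2^-1).
have [V rV] : exists V, forall m, supported_in (r m) V := rounding_supported hS Fl.
pose h' k t := h k t - rowmul_ZZ r (fmat M g) k t.
have h'S k := supported_inB (hS k) (rowmul_ZZ_supported rV fS k).
have h'F m t : rowmul_ZR h' Finv m t = rowmul_ZR h Finv m t - (r m t)%:~R.
  by rewrite (rowmul_ZR_subl Finv m t hS (rowmul_ZZ_supported rV fS)) (rowmul_assoc rV fS Finv_right).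
have [[m0 [u0 h'u0]]|h'0] := pselect (exists m u, h' m u != 0); last first.
  exfalso; apply: h_notin; exists r; split => [k|]; first exact: supported_in_ZG (rV k).
  apply/funext => k; apply/funext => t; apply/eqP; rewrite -subr_eq0.
  by apply/negPn/negP => h'kt; apply: h'0; exists k, t.
have [m [u [h'mu umin]]] := minimal_support_point Psg P1 h'S h'u0.
have := value_at_minimal gZ Mpos Mbig Psg P1 gP Fl Finv_left h'S umin m.
rewrite h'F => /(fractional_witness (Mpos m) h'mu) [j [j1 jM xj]].
by exists u, m, j.
Qed.
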